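(* For every integer $n$, \[ \sum_{k=1}^n(-1)^{k-1}F_k^{\,4}=\frac{(-1)^{n-1}}{3}F_nF_{n+1}F_{n-2}F_{n+3}\,. \]
   Context: $F_i$ denotes the Fibonacci numbers, defined for all $i\in\mathbb{Z}$ by $F_i=F_{i-1}+F_{i-2}$, $F_0=0$, $F_1=1$; equivalently $F_{-i}=(-1)^{i-1}F_i$. Summation convention for an arbitrary integer upper limit: $\sum_{k=a}^{a-1} f(k)=0$, and for $n<a-1$, $\sum_{k=a}^{n} f(k) = -\sum_{k=n+1}^{a-1} f(k)$. *)

From mathcomp Require Import all_boot all_order all_algebra.
Set Implicit Arguments. Unset Strict Implicit. Unset Printing Implicit Defensive.
Import Order.TTheory GRing.Theory Num.Theory.
Local Open Scope ring_scope.

Fixpoint fibn (i : nat) : nat :=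
  match i with
  | 0%N => 0%N
  | 1%N => 1%N
  | (j.+1 as k).+1 => (fibn k + fibn j)%N
  end.

(* Fibonacci numbers on Z: F_{-i} = (-1)^(i-1) F_i. *)
Definition fibz (i : int) : int :=
  match i with
  | Posz m => (fibn m)%:Z
  | Negz m => (-1) ^+ m * (fibn m.+1)%:Z   (* Negz m = -(m+1), (-1)^((m+1)-1) *)
  end.

(* Sum over integer range with the convention:
   sum_{k=a}^{n} f k = f a + ... + f n           if n >= a - 1 (empty if n = a-1),
                     = - sum_{k=n+1}^{a-1} f k   if n < a - 1. *)
Definition isum (R : zmodType) (a n : int) (f : int -> R) : R :=
  if a - 1 <= n then \sum_(i < absz (n - a + 1)%R) f (a + i%:Z)
  else - \sum_(i < absz (a - 1 - n)%R) f (n + 1 + i%:Z).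

Example fibz_neg : [seq fibz (- (i%:Z)) | i <- iota 0 7] = [:: 0; 1; -1; 2; -3; 5; -8].
Proof. by []. Qed.

(* Both sides vanish at n = 0, and the right-hand side G n satisfies
   G n - G (n - 1) = (-1)^(n-1) F_n^4 for every integer n. Writing x = F_n and
   y = F_(n+1), this step is the polynomial identity
     x y (2x - y)(x + 2y) + x (y - x)(2y - 3x)(x + y) = 3 x^4,
   since the Fibonacci recurrence expresses F_(n-3), ..., F_(n+3) in x and y.
   With the signed convention for reversed ranges, isum a n f - isum a (n-1) f
   = f n holds for every integer n, so the sum telescopes against G in both
   directions. *)

From mathcomp Require Import all_boot all_order all_algebra.
From mathcomp Require Import zify ring.
Set Implicit Arguments. Unset Strict Implicit. Unset Printing Implicit Defensive.
Import Order.TTheory GRing.Theory Num.Theory.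
Local Open Scope ring_scope.

Lemma fibzSS (k : int) : fibz (k + 2) = fibz (k + 1) + fibz k.
Proof.
case: k => [m|[|[|m]]] //.
- have -> : Posz m + 2 = Posz m.+2 by rewrite -PoszD addn2.
  by rewrite -PoszD addn1.
- have -> : Negz m.+2 + 2 = Negz m by rewrite !NegzE; lia.
  have -> : Negz m.+2 + 1 = Negz m.+1 by rewrite !NegzE; lia.
  rewrite /= !exprS !PoszD; ring.
Qed.

Section FibonacciLike.

Variables (R : comNzRingType) (u : int -> R).
Hypothesis uSS : forall k, u (k + 2) = u (k + 1) + u k.

Lemma fib_like_quartic (n : int) :
  u n * u (n + 1) * u (n - 2) * u (n + 3) + u (n - 1) * u n * u (n - 3) * u (n + 2)
  = 3%:R * u n ^+ 4.
Proof.
have uS i j k : j = i + 1 -> k = i + 2 -> u k = u j + u i.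
  by move=> -> ->; apply: uSS.
have uB i j k : j = i + 1 -> k = i + 2 -> u i = u k - u j.
  by move=> ij ik; rewrite (uS i j k) // [RHS]addrC addKr.
have u2 : u (n + 2) = u (n + 1) + u n by apply: uS; lia.
have u3 : u (n + 3) = u (n + 2) + u (n + 1) by apply: uS; lia.
have u_1 : u (n - 1) = u (n + 1) - u n by apply: uB; lia.
have u_2 : u (n - 2) = u n - u (n - 1) by apply: uB; lia.
have u_3 : u (n - 3) = u (n - 1) - u (n - 2) by apply: uB; lia.
rewrite u_3 u_2 u_1 u3 u2; ring.
Qed.

End FibonacciLike.

Lemma int_pred_invariant_const (T : Type) (h : int -> T) :
  (forall k, h k = h (k - 1)) -> forall m n, h m = h n.
Proof.
move=> hP; suff h0 m : h m = h 0 by move=> m n; rewrite h0 [RHS]h0.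
case: (intP m) => [|m'|m'] //.
- elim: m' => [|m' IH]; first by rewrite hP.
  by rewrite hP (_ : m'.+2%:Z - 1 = m'.+1) // -IH.
- elim: m' => [|m' IH]; first by rewrite [RHS]hP.
  by rewrite -IH (hP (- m'.+1%:Z)); congr h; lia.
Qed.

Section TelescopingIntegerSums.

Variables (R : zmodType) (a : int) (f : int -> R).

Lemma isum_pred_start : isum a (a - 1) f = 0.
Proof.
by rewrite /isum lexx (_ : absz (a - 1 - a + 1)%R = 0%N) ?big_ord0 //; lia.
Qed.

Lemma isumS (n : int) : isum a n f = isum a (n - 1) f + f n.
Proof.
rewrite /isum; case: (ltrgtP (a - 1) n) => [lt_a1n | lt_na1 | <-].
- have -> : (a - 1 <= n - 1) = true by lia.
  have -> : absz (n - a + 1) = (absz (n - 1 - a + 1)%R).+1 by lia.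
  by rewrite big_ord_recr /=; congr (_ + f _); lia.
- have -> : (a - 1 <= n - 1) = false by lia.
  have -> : absz (a - 1 - (n - 1))%R = (absz (a - 1 - n)%R).+1 by lia.
  rewrite big_ord_recl /= subrK addr0 opprD [RHS]addrAC addNr add0r.
  congr (- _).
  by apply: eq_bigr => i _; congr f; rewrite /= /bump /=; lia.
- have -> : (a - 1 <= a - 1 - 1) = false by lia.
  have -> : absz (a - 1 - a + 1)%R = 0%N by lia.
  have -> : absz (a - 1 - (a - 1 - 1))%R = 1%N by lia.
  by rewrite big_ord0 big_ord1 /= subrK addr0 addNr.
Qed.

Lemma isum_telescope (G : int -> R) :
  (forall k, G k = G (k - 1) + f k) -> forall n, isum a n f = G n - G (a - 1).
Proof.
move=> GS n; pose h k := isum a k f - G k.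
have hP k : h k = h (k - 1) by rewrite /h isumS GS opprD addrACA subrr addr0.
have /eqP : h n = h (a - 1) by apply: int_pred_invariant_const.
by rewrite /h isum_pred_start sub0r subr_eq addrC => /eqP.
Qed.

End TelescopingIntegerSums.

Lemma signz_pred (F : fieldType) (k : int) : (-1 : F) ^ (k - 1) = - (-1) ^ k.
Proof. by rewrite expfzDr ?oppr_eq0 ?oner_eq0 // exprN1 invrN1 mulrN1. Qed.

Theorem corollary3 (n : int) :
  isum 1 n (fun k : int => (-1 : rat) ^ (k - 1) * ((fibz k)%:~R : rat) ^+ 4) =
  (-1 : rat) ^ (n - 1) / 3%:R *
    ((fibz n)%:~R * (fibz (n + 1))%:~R * (fibz (n - 2))%:~R * (fibz (n + 3))%:~R).
Proof.
pose F k : rat := (fibz k)%:~R.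
pose G k := (-1 : rat) ^ (k - 1) / 3%:R * (F k * F (k + 1) * F (k - 2) * F (k + 3)).
have FSS k : F (k + 2) = F (k + 1) + F k by rewrite /F fibzSS intrD.
have GS k : G k = G (k - 1) + (-1) ^ (k - 1) * F k ^+ 4.
  rewrite /G [(-1) ^ (k - 1 - 1)]signz_pred.
  have -> : k - 1 + 1 = k by lia.
  have -> : k - 1 - 2 = k - 3 by lia.
  have -> : k - 1 + 3 = k + 2 by lia.
  have x4 : F k ^+ 4 = (F k * F (k + 1) * F (k - 2) * F (k + 3)
                        + F (k - 1) * F k * F (k - 3) * F (k + 2)) / 3%:R.
    by rewrite fib_like_quartic // mulrC mulKf.
  rewrite x4; ring.
have G0 : G 0 = 0 by rewrite /G /F /= !mul0r mulr0.
by rewrite (isum_telescope 1 GS) subrr G0 subr0.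
Qed.
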